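(* Let $n,m\ge1$ be integers (not necessarily distinct). Then for the Ramsey number $\mathcal{R}_{\mathcal{DIV}}$ with respect to the class $\mathcal{DIV}$ of divisibility graphs, \[ \mathcal{R}_{\mathcal{DIV}}(n,m)=\mathcal{R}_{\mathcal{PO}}(n,m)=(n-1)(m-1)+1 . \]
   Context: For a commutative ring $R$ (with $1\ne0$), a proper element is a non-zero non-unit; for distinct $a,b$, $a\parallel b$ means $a\mid b$ and $b\nmid a$. The divisibility graph $\mathrm{Div}(R)$ has the proper elements of $R$ as vertices, distinct $a,b$ adjacent iff $a\parallel b$ or $b\parallel a$; $\mathcal{DIV}$ is the class of all divisibility graphs of commutative rings. $\mathcal{PO}$ is the class of partial order graphs $G_A$ of posets $(A,\le)$ (vertex set $A$, distinct $a,b$ adjacent iff $a\le b$ or $b\le a$). For a class $\mathcal{C}$ of graphs, $\mathcal{R}_{\mathcal{C}}(n,m)$ is the minimal $r$ such that every induced subgraph with $r$ vertices of any graph in $\mathcal{C}$ contains either $K_n$ or an independent set of $m$ vertices. *)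

From mathcomp Require Import all_boot all_algebra.
Set Implicit Arguments. Unset Strict Implicit. Unset Printing Implicit Defensive.
Import GRing.Theory.
Local Open Scope ring_scope.

Definition rdivides (R : comNzRingType) (a b : R) : Prop := exists c : R, b = a * c.
Definition runit (R : comNzRingType) (a : R) : Prop := exists u : R, a * u = 1.
Definition proper_elt (R : comNzRingType) (a : R) : Prop := a <> 0 /\ ~ runit a.
Definition sdiv (R : comNzRingType) (a b : R) : Prop :=
  a <> b /\ rdivides a b /\ ~ rdivides b a.
Definition div_adj (R : comNzRingType) (a b : R) : Prop := sdiv a b \/ sdiv b a.

Definition po_adj (A : Type) (le : A -> A -> Prop) (a b : A) : Prop :=
  a <> b /\ (le a b \/ le b a).

Definition is_poset (A : Type) (le : A -> A -> Prop) : Prop :=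
  (forall a, le a a) /\ (forall a b, le a b -> le b a -> a = b) /\
  (forall a b c, le a b -> le b c -> le a c).

(* Every induced subgraph on r distinct vertices (f : 'I_r -> V injective,
   with vertices satisfying the vertex predicate Vert) contains K_n or an
   independent set of m vertices. *)
Definition ramsey_good (V : Type) (Vert : V -> Prop) (adj : V -> V -> Prop)
    (n m r : nat) : Prop :=
  forall f : 'I_r -> V, injective f -> (forall i, Vert (f i)) ->
    (exists g : 'I_n -> 'I_r, injective g /\
       forall i j, i <> j -> adj (f (g i)) (f (g j))) \/
    (exists h : 'I_m -> 'I_r, injective h /\
       forall i j, i <> j -> ~ adj (f (h i)) (f (h j))).

Definition DIV_good (n m r : nat) : Prop :=
  forall R : comNzRingType, ramsey_good (@proper_elt R) (@div_adj R) n m r.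

Definition PO_good (n m r : nat) : Prop :=
  forall (A : Type) (le : A -> A -> Prop), is_poset le ->
    ramsey_good (fun _ : A => True) (po_adj le) n m r.

Definition is_least (P : nat -> Prop) (N : nat) : Prop :=
  P N /\ forall r, P r -> (N <= r)%N.

From mathcomp Require Import all_boot all_algebra.
From mathcomp Require Import zify boolp.

Set Implicit Arguments.
Unset Strict Implicit.
Unset Printing Implicit Defensive.

Import GRing.Theory.

(* Both Div(R) and G_A are comparability graphs of strict orders (proper
   divisibility, resp. the strict part of the partial order), so the upper
   bound is Mirsky's theorem: a strict order on more than (n-1)(m-1) points has
   a chain of size n or an antichain of size m, found by repeatedly removing
   the set of minimal elements.  For the lower bound, the disjoint union of
   m-1 chains of length n-1 has neither; it is realised inside the
   divisibility order on naturals by i |-> 2^i 3^(m-1 - i/(n-1)), and the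
   divisibility graph of Z restricted to positive integers is exactly the
   comparability graph of that order. *)

Section Mirsky.

Variables (T : finType) (lt : rel T).
Hypotheses (ltxx : irreflexive lt) (lt_trans : transitive lt).

Definition chain (C : {set T}) := {in C &, forall x y, x != y -> lt x y || lt y x}.
Definition antichain (A : {set T}) := {in A &, forall x y, ~~ lt x y}.

Definition minimals (S : {set T}) := [set x in S | [forall y in S, ~~ lt y x]].

Lemma in_minimals (S : {set T}) x :
  (x \in minimals S) = (x \in S) && [forall y in S, ~~ lt y x].
Proof. by rewrite inE. Qed.

Lemma minimals_subset (S : {set T}) : minimals S \subset S.
Proof. by apply/subsetP => x; rewrite in_minimals => /andP[]. Qed.

Lemma antichain_minimals (S : {set T}) : antichain (minimals S).
Proof.
move=> x y /(subsetP (minimals_subset S)) Sx.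
by rewrite in_minimals => /andP[_ /forall_inP]; apply.
Qed.

(* A minimiser of the number of elements below it is minimal, by transitivity. *)
Lemma minimals_exists (S : {set T}) x0 : x0 \in S -> exists c, c \in minimals S.
Proof.
move=> Sx0; have [c Sc c_min] := arg_minnP (fun x => #|[set y in S | lt y x]|) Sx0.
exists c; rewrite in_minimals; apply/andP; split; first exact: Sc.
apply/forall_inP => z Sz; apply/negP => lt_zc.
have : [set y in S | lt y z] \proper [set y in S | lt y c].
  apply/properP; split; last by exists z; rewrite !inE ?Sz ?lt_zc ?ltxx.
  by apply/subsetP => y; rewrite !inE => /andP[-> lt_yz]; apply: lt_trans lt_zc.
by move/proper_card; rewrite ltnNge c_min.
Qed.

Lemma chain1 x : chain [set x].
Proof. by move=> y z; rewrite !inE => /eqP-> /eqP->; rewrite eqxx. Qed.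

(* The least element c of C is not minimal in S, and anything below c lies
   below all of C. *)
Lemma chain_extend (S C : {set T}) : C \subset S :\: minimals S -> C != set0 -> chain C ->
  exists2 y, (y \in S) && (y \notin C) & chain (y |: C).
Proof.
move=> sub_C /set0Pn[x0 Cx0] chC.
have [c] := minimals_exists Cx0; rewrite in_minimals => /andP[Cc /forall_inP c_min].
move: (subsetP sub_C c Cc); rewrite in_setD => /andP[+ Sc].
rewrite in_minimals Sc => /forall_inPn[y Sy /negPn lt_yc].
have CNy : y \notin C by apply/negP => /c_min; rewrite lt_yc.
have lt_y z : z \in C -> lt y z.
  move=> Cz; have [-> //|neq_zc] := eqVneq z c.
  case/orP: (chC _ _ Cz Cc neq_zc) => [lt_zc|]; last exact: lt_trans.
  by move: (c_min z Cz); rewrite lt_zc.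
exists y; first by rewrite Sy CNy.
move=> a b; rewrite !inE => /predU1P[-> | Ca] /predU1P[-> | Cb]; rewrite ?eqxx //.
- by rewrite lt_y.
- by rewrite lt_y ?orbT.
- exact: chC.
Qed.

Lemma mirsky m n (S : {set T}) : n * m.-1 < #|S| ->
  (exists C : {set T}, [/\ C \subset S, n.+1 <= #|C| & chain C]) \/
  (exists A : {set T}, [/\ A \subset S, m <= #|A| & antichain A]).
Proof.
elim: n S => [|n IHn] S card_S.
  have [x Sx] : exists x, x \in S by apply/set0Pn; rewrite -card_gt0.
  by left; exists [set x]; rewrite sub1set cards1 Sx; split=> //; apply: chain1.
have [large_M | small_M] := leqP m #|minimals S|.
  by right; exists (minimals S); split=> //;
    [exact: minimals_subset | exact: antichain_minimals].
have card_SM : n * m.-1 < #|S :\: minimals S|.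
  by rewrite cardsD (setIidPr (minimals_subset S)); lia.
have [[C [sub_C card_C chC]] | [A [sub_A card_A acA]]] := IHn _ card_SM.
  have C_n0 : C != set0 by rewrite -card_gt0; apply: leq_trans card_C.
  have [y /andP[Sy CNy] chyC] := chain_extend sub_C C_n0 chC.
  left; exists (y |: C); split=> //; last by rewrite cardsU1 CNy.
  by rewrite subUset sub1set Sy (subset_trans sub_C) ?subsetDl.
by right; exists A; split; rewrite ?(subset_trans sub_A) ?subsetDl.
Qed.

End Mirsky.

Lemma injection_of_card (T : finType) (A : {set T}) n : n <= #|A| ->
  exists g : 'I_n -> T, injective g /\ forall i, g i \in A.
Proof.
move=> le_nA; exists (fun i => enum_val (widen_ord le_nA i)); split.
  by move=> i j /enum_val_inj /(congr1 val) /= /val_inj.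
by move=> i; apply: enum_valP.
Qed.

Lemma ramsey_good_comparability (V : Type) (Vert : V -> Prop)
    (adj lt : V -> V -> Prop) n m :
  (forall a, ~ lt a a) -> (forall a b c, lt a b -> lt b c -> lt a c) ->
  (forall a b, adj a b <-> lt a b \/ lt b a) -> 0 < n ->
  ramsey_good Vert adj n m (n.-1 * m.-1).+1.
Proof.
move=> ltxx lt_trans adjE n_gt0 f _ _.
pose ltb i j := `[< lt (f i) (f j) >].
have ltbxx : irreflexive ltb by move=> i; apply/asboolP/ltxx.
have ltb_trans : transitive ltb.
  by move=> j i k /asboolP lt_ij /asboolP lt_jk; apply/asboolP; apply: lt_trans lt_jk.
have card_T : n.-1 * m.-1 < #|[set: 'I_(n.-1 * m.-1).+1]| by rewrite cardsT card_ord.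
have [[C [_ card_C chC]] | [A [_ card_A acA]]] := mirsky ltbxx ltb_trans card_T.
- rewrite prednK // in card_C; have [g [inj_g Cg]] := injection_of_card card_C.
  left; exists g; split=> // i j /eqP neq_ij; apply/adjE.
  have neq_g : g i != g j by apply: contra neq_ij => /eqP/inj_g->.
  by case/orP: (chC _ _ (Cg i) (Cg j) neq_g) => /asboolP; [left | right].
- have [h [inj_h Ah]] := injection_of_card card_A.
  right; exists h; split=> // i j _ /adjE[] lt_h.
    by move/negP: (acA _ _ (Ah i) (Ah j)); apply; apply/asboolP.
  by move/negP: (acA _ _ (Ah j) (Ah i)); apply; apply/asboolP.
Qed.

(* A clique injects into the rows of a single column, an independent set into
   the set of columns. *)
Lemma not_ramsey_good_grid (V : Type) (Vert : V -> Prop) (adj : V -> V -> Prop)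
    n m a b r (f : 'I_r -> V) (row : 'I_r -> 'I_a) (col : 'I_r -> 'I_b) :
  a < n -> b < m -> injective f -> (forall i, Vert (f i)) ->
  injective (fun i => (row i, col i)) ->
  (forall i j, i <> j -> adj (f i) (f j) <-> col i = col j) ->
  ~ ramsey_good Vert adj n m r.
Proof.
move=> lt_an lt_bm inj_f Vf inj_rc adjE /(_ f inj_f Vf) [[g [inj_g clique]] | [h [inj_h indep]]].
  have inj_row : injective (row \o g).
    move=> i j /= eq_row; apply/inj_g/inj_rc; congr pair => //.
    have [-> // | /eqP neq_ij] := eqVneq i j.
    by apply/(adjE _ _ (fun eq_g => neq_ij (inj_g _ _ eq_g)))/clique.
  by move: (leq_card _ inj_row); rewrite !card_ord leqNgt lt_an.
have inj_col : injective (col \o h).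
  move=> i j /= eq_col; apply: contra_eq eq_col => /eqP neq_ij; apply/eqP => eq_col.
  by apply: (indep _ _ neq_ij); apply/adjE => // /inj_h.
by move: (leq_card _ inj_col); rewrite !card_ord leqNgt lt_bm.
Qed.

Lemma dvdn_pow2_pow3 a b c e :
  (2 ^ a * 3 ^ b %| 2 ^ c * 3 ^ e) = (a <= c) && (b <= e).
Proof.
rewrite Gauss_dvd ?coprimeXl ?coprimeXr // Gauss_dvdl ?coprimeXl ?coprimeXr //.
by rewrite Gauss_dvdr ?coprimeXl ?coprimeXr // !dvdn_Pexp2l.
Qed.

Definition chain_code d k i := 2 ^ i * 3 ^ (k - i %/ d).

Lemma chain_code_dvd d k i j : i %/ d <= k -> j %/ d <= k ->
  (chain_code d k i %| chain_code d k j) = (i <= j) && (i %/ d == j %/ d).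
Proof.
rewrite dvdn_pow2_pow3 => le_ik le_jk; have [le_ij | //] := leqP i j.
by have := leq_div2r d le_ij; lia.
Qed.

Lemma chain_code_gt1 d k i : i %/ d < k -> 1 < chain_code d k i.
Proof.
rewrite /chain_code -subn_gt0; case: (k - _) => // e _.
by rewrite expnS; have := expn_gt0 2 i; have := expn_gt0 3 e; nia.
Qed.

Section ChainGrid.

Context {d k r : nat} (r_le : r <= d * k).

Lemma grid_width_gt0 (i : 'I_r) : 0 < d.
Proof. by have := ltn_ord i; nia. Qed.

Lemma grid_quotient_lt (i : 'I_r) : i %/ d < k.
Proof.
by rewrite ltn_divLR ?(grid_width_gt0 i) //; have := ltn_ord i; lia.
Qed.

Definition chain_row (i : 'I_r) : 'I_d := Ordinal (ltn_pmod i (grid_width_gt0 i)).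
Definition chain_col (i : 'I_r) : 'I_k := Ordinal (grid_quotient_lt i).

Lemma chain_row_col_inj : injective (fun i => (chain_row i, chain_col i)).
Proof.
move=> i j [eq_mod eq_div]; apply: val_inj.
by rewrite /= (divn_eq i d) (divn_eq j d) eq_mod eq_div.
Qed.

Lemma chain_code_ord_dvd (i j : 'I_r) :
  (chain_code d k i %| chain_code d k j) = (i <= j) && (chain_col i == chain_col j).
Proof.
by rewrite chain_code_dvd ?(ltnW (grid_quotient_lt _)) // -val_eqE.
Qed.

Lemma chain_code_inj : injective (fun i : 'I_r => chain_code d k i).
Proof.
move=> i j /= eq_code; apply/val_inj/eqP; rewrite eqn_leq.
have := chain_code_ord_dvd i j; have := chain_code_ord_dvd j i.
by rewrite eq_code dvdnn => /esym/andP[-> _] /esym/andP[-> _].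
Qed.

Lemma chain_code_comparable (i j : 'I_r) :
  (chain_code d k i %| chain_code d k j) || (chain_code d k j %| chain_code d k i) =
  (chain_col i == chain_col j).
Proof.
rewrite !chain_code_ord_dvd [chain_col j == _]eq_sym.
by case: eqP => _; rewrite ?andbF ?andbT ?leq_total.
Qed.

Lemma chain_code_adj (i j : 'I_r) : i <> j ->
  po_adj (fun a b : nat => a %| b) (chain_code d k i) (chain_code d k j) <->
  chain_col i = chain_col j.
Proof.
move=> neq_ij; split.
  by case=> _ dvd; apply/eqP; rewrite -chain_code_comparable; case: dvd => ->; rewrite ?orbT.
move=> eq_col; split; first by move/chain_code_inj.
by have := chain_code_comparable i j; rewrite eq_col eqxx => /orP[]; [left | right].
Qed.

End ChainGrid.

Lemma po_adj_strict (A : Type) (le : A -> A -> Prop) a b :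
  po_adj le a b <-> (a <> b /\ le a b) \/ (b <> a /\ le b a).
Proof.
split=> [[neq_ab [le_ab | le_ba]] | [[neq_ab le_ab] | [neq_ba le_ba]]].
- by left.
- by right; split=> // eq_ba; apply: neq_ab.
- by split=> //; left.
- by split=> [eq_ab | ]; [apply: neq_ba | right].
Qed.

Lemma PO_good_bound n m : 0 < n -> PO_good n m (n.-1 * m.-1).+1.
Proof.
move=> n_gt0 A le [_ [le_anti le_trans]].
apply: (ramsey_good_comparability (lt := fun a b => a <> b /\ le a b)) n_gt0.
- by move=> a [].
- move=> a b c [neq_ab le_ab] [neq_bc le_bc]; split; last exact: le_trans le_bc.
  by move=> eq_ac; rewrite eq_ac in neq_ab le_ab; apply/neq_ab/le_anti.
- exact: po_adj_strict.
Qed.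

Lemma dvdn_poset : is_poset (fun a b : nat => a %| b).
Proof.
split; first exact: dvdnn.
split; last by move=> a b c; apply: dvdn_trans.
by move=> a b dvd_ab dvd_ba; apply/eqP; rewrite eqn_dvd dvd_ab dvd_ba.
Qed.

Lemma not_PO_good n m r : 0 < n -> 0 < m -> r <= n.-1 * m.-1 -> ~ PO_good n m r.
Proof.
move=> n_gt0 m_gt0 r_le /(_ nat _ dvdn_poset).
apply: (not_ramsey_good_grid (f := fun i => chain_code n.-1 m.-1 i)
  (row := chain_row r_le) (col := chain_col r_le)); rewrite ?ltn_predL //.
- exact: chain_code_inj.
- exact: chain_row_col_inj.
- exact: chain_code_adj.
Qed.

Section IntDivisibility.
Local Open Scope ring_scope.

Lemma rdivides_trans (R : comNzRingType) (a b c : R) :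
  rdivides a b -> rdivides b c -> rdivides a c.
Proof. by case=> x -> [y ->]; exists (x * y); rewrite mulrA. Qed.

Lemma sdiv_trans (R : comNzRingType) (a b c : R) : sdiv a b -> sdiv b c -> sdiv a c.
Proof.
move=> [_ [dvd_ab ndvd_ba]] [_ [dvd_bc ndvd_cb]]; split.
  by move=> eq_ac; rewrite eq_ac in dvd_ab; apply: ndvd_cb.
split; first exact: rdivides_trans dvd_bc.
by move=> dvd_ca; apply/ndvd_cb/(rdivides_trans dvd_ca).
Qed.

Lemma rdivides_nat (a b : nat) : rdivides a%:Z b%:Z <-> (a %| b)%N.
Proof.
split; last by case/dvdnP=> c ->; exists c%:Z; rewrite PoszM mulrC.
by case=> c /(congr1 absz); rewrite abszM /= => ->; apply: dvdn_mulr.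
Qed.

Lemma div_adj_nat (a b : nat) :
  div_adj a%:Z b%:Z <-> po_adj (fun x y : nat => x %| y)%N a b.
Proof.
have sdiv_nat x y : sdiv x%:Z y%:Z <-> x <> y /\ (x %| y)%N.
  split=> [[neq_xy [/rdivides_nat dvd_xy _]] | [neq_xy dvd_xy]].
    by split=> // eq_xy; apply: neq_xy; rewrite eq_xy.
  split; first by case.
  split; first exact/rdivides_nat.
  by move/rdivides_nat => dvd_yx; apply/neq_xy/eqP; rewrite eqn_dvd dvd_xy dvd_yx.
rewrite /div_adj !sdiv_nat; exact: iff_sym (po_adj_strict _ _ _).
Qed.

Lemma proper_elt_nat (a : nat) : (1 < a)%N -> proper_elt a%:Z.
Proof.
move=> a_gt1; split; first by case=> a0; rewrite a0 in a_gt1.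
case=> u au; have /rdivides_nat : rdivides a%:Z 1%:Z by exists u; rewrite au.
by rewrite dvdn1 => /eqP a1; rewrite a1 in a_gt1.
Qed.

End IntDivisibility.

Lemma DIV_good_bound n m : 0 < n -> DIV_good n m (n.-1 * m.-1).+1.
Proof.
move=> n_gt0 R; apply: (ramsey_good_comparability (lt := @sdiv R)) n_gt0 => //.
- by move=> a [].
- exact: sdiv_trans.
Qed.

Lemma not_DIV_good n m r : 0 < n -> 0 < m -> r <= n.-1 * m.-1 -> ~ DIV_good n m r.
Proof.
move=> n_gt0 m_gt0 r_le /(_ int).
apply: (not_ramsey_good_grid (f := fun i => Posz (chain_code n.-1 m.-1 i))
  (row := chain_row r_le) (col := chain_col r_le)); rewrite ?ltn_predL //.
- by move=> i j [/(chain_code_inj r_le)].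
- by move=> i; apply/proper_elt_nat/chain_code_gt1/(grid_quotient_lt r_le).
- exact: chain_row_col_inj.
- by move=> i j neq_ij; apply: iff_trans (div_adj_nat _ _) (chain_code_adj r_le neq_ij).
Qed.

Lemma is_least_intro (P : nat -> Prop) N :
  P N -> (forall r, r < N -> ~ P r) -> is_least P N.
Proof. by move=> PN least; split=> // r Pr; rewrite leqNgt; apply/negP => /least. Qed.

Theorem theorem3p8 (n m : nat) (hn : (1 <= n)%N) (hm : (1 <= m)%N) :
  is_least (DIV_good n m) ((n - 1) * (m - 1) + 1)%N /\
  is_least (PO_good n m) ((n - 1) * (m - 1) + 1)%N.
Proof.
rewrite !subn1 addn1; split; apply: is_least_intro.
- exact: DIV_good_bound.
- by move=> r; rewrite ltnS; apply: not_DIV_good.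
- exact: PO_good_bound.
- by move=> r; rewrite ltnS; apply: not_PO_good.
Qed.
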